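(* Suppose $G_{ii}>0$ for every $i\in\{1,\dots,p\}$. Then the problem $\min_{u\in\mathbb{R}^H}F(u)$, with $F(u):=p\log\big(\sum_{i=1}^pe^{(Bu)_i}G_{ii}\big)-\sum_{i=1}^p(Bu)_i$, has a solution.
   Context: $\mathcal G=(V,E)$ is a finite DAG; input neurons have no incoming edges, output neurons no outgoing edges, hidden neurons $\mathcal H$ ($H=|\mathcal H|$) are the rest. $\theta\in\mathbb{R}^p$ consists of one weight per edge and one bias $b_v$ per non-input neuron $v$. For $h\in\mathcal H$, $\mathrm{in}_h$ = indices of $b_h$ and of weights of edges entering $h$, $\mathrm{out}_h$ = indices of weights of edges leaving $h$. $B\in\mathbb{R}^{p\times H}$ has $B_{ih}=-1$ if $i\in\mathrm{in}_h$, $1$ if $i\in\mathrm{out}_h$, $0$ otherwise. $G=\partial\Phi(\theta)^\top\partial\Phi(\theta)$ where $\Phi:\mathbb{R}^p\to\mathbb{R}^q$ is the path-lifting: for each path $v_0\to\cdots\to v_d$ along edges ending at an output neuron (for $d=0$, $v_0$ non-input), the coordinate is the product of the weights along the path, times $b_{v_0}$ if $v_0$ is not an input neuron. *)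

From HB Require Import structures.
From mathcomp Require Import all_boot all_order all_algebra.
From mathcomp Require Import all_classical all_reals all_analysis.
Set Implicit Arguments. Unset Strict Implicit. Unset Printing Implicit Defensive.
Import Order.TTheory GRing.Theory Num.Theory.
Local Open Scope ring_scope.

Section Network.
Variables (V : finType) (E : rel V).

Definition acyclic := forall v : V, ~~ [exists w, E v w && connect E w v].

Definition is_input (v : V) := [forall u, ~~ E u v].
Definition is_output (v : V) := [forall w, ~~ E v w].
Definition is_hidden (v : V) := ~~ is_input v && ~~ is_output v.

Definition edge := {e : V * V | E e.1 e.2}.
Definition noninput := {v : V | ~~ is_input v}.
Definition hidden := {v : V | is_hidden v}.

(* parameter index set: one weight per edge, one bias per non-input neuron *)
Definition param := (edge + noninput)%type.

Variable R : realType.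

(* weight of the edge u -> v (0 if not an edge, never used then) *)
Definition wt (th : param -> R) (u v : V) : R :=
  match insub (u, v) : option edge with Some e => th (inl e) | None => 0 end.
Definition biasf (th : param -> R) (v : V) : R :=
  match insub v : option noninput with Some b => th (inr b) | None => 1 end.

(* x :: s is a path of the path-lifting: along edges, ending at an output
   neuron, and if it has length 0 its vertex is non-input *)
Definition valid_path (x : V) (s : seq V) :=
  [&& path E x s, is_output (last x s) & (s != [::]) || ~~ is_input x].

Definition Phi (th : param -> R) (x : V) (s : seq V) : R :=
  biasf th x * \prod_(y <- pairmap (wt th) x s) y.

Definition upd (th : param -> R) (i : param) (t : R) : param -> R :=
  fun j => if j == i then th i + t else th j.

Definition dPhi (th : param -> R) (i : param) (x : V) (s : seq V) : R :=
  derive1 (fun t => Phi (upd th i t) x s) 0.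

(* G = dPhi^T dPhi; paths are enumerated as tuples of d+1 vertices,
   d < #|V| (every path in a DAG has at most #|V| vertices) *)
Definition Gram (th : param -> R) (i j : param) : R :=
  \sum_(d < #|V|) \sum_(q : (d.+1).-tuple V | valid_path (thead q) (behead q))
     dPhi th i (thead q) (behead q) * dPhi th j (thead q) (behead q).

Definition in_h (h : hidden) (i : param) : bool :=
  match i with inl e => (val e).2 == val h | inr b => val b == val h end.
Definition out_h (h : hidden) (i : param) : bool :=
  match i with inl e => (val e).1 == val h | inr _ => false end.

Definition Bmat (i : param) (h : hidden) : R :=
  if in_h h i then -1 else if out_h h i then 1 else 0.

Definition Bu (u : hidden -> R) (i : param) : R := \sum_h Bmat i h * u h.

Definition Fobj (th : param -> R) (u : hidden -> R) : R :=
  #|{: param}|%:R * ln (\sum_i expR (Bu u i) * Gram th i i) - \sum_i Bu u i.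

End Network.

From HB Require Import structures.
From mathcomp Require Import all_boot all_order all_algebra.
From mathcomp Require Import all_classical all_reals all_analysis.
From mathcomp Require Import lra.
Import Order.TTheory GRing.Theory Num.Theory.
Import numFieldTopology.Exports numFieldNormedType.Exports.
Local Open Scope ring_scope.

(* F is continuous and coercive, hence attains its minimum on a large enough
   box.  Coercivity: writing a = Bu and g_i = G_ii, we have
   F = sum_i (log S - a_i) with S = sum_i e^(a_i) g_i and log S >= a_j + log g_j
   for every j, so F >= a_k - a_i0 - 2 sum_i |log g_i| for all k, i0.  The bias
   coordinate of a hidden neuron h has a = -u_h, and the bias coordinate of a
   non-input output neuron (which exists since the graph is acyclic) has a = 0;
   hence F(u) >= |u_h| - 2 sum_i |log g_i|. *)

Section LogSumExp.
Variables (R : realType) (I : finType) (g : I -> R).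
Hypothesis g_gt0 : forall i, 0 < g i.

Lemma sum_expR_gt0 (a : I -> R) (k : I) : 0 < \sum_i expR (a i) * g i.
Proof.
rewrite (bigD1 k) //= ltr_pwDl ?mulr_gt0 ?expR_gt0 //.
by apply: sumr_ge0 => i _; rewrite mulr_ge0 ?expR_ge0 ?ltW.
Qed.

Lemma ler_ln_sum_expR (a : I -> R) (j : I) :
  a j + ln (g j) <= ln (\sum_i expR (a i) * g i).
Proof.
have S_gt0 := sum_expR_gt0 a j.
rewrite -[X in X + _]expRK -lnM ?posrE ?expR_gt0 // ler_ln ?posrE ?mulr_gt0 ?expR_gt0 //.
rewrite (bigD1 j) //= lerDl.
by apply: sumr_ge0 => i _; rewrite mulr_ge0 ?expR_ge0 ?ltW.
Qed.

Lemma logsumexp_objective_ge (a : I -> R) (k i0 : I) :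
  a k - a i0 - 2 * \sum_i `|ln (g i)| <=
  #|{: I}|%:R * ln (\sum_i expR (a i) * g i) - \sum_i a i.
Proof.
set S := \sum_i expR (a i) * g i; set K := \sum_i `|ln (g i)|.
have ln_ge i : - `|ln (g i)| <= ln (g i) by rewrite lerNl ler_normr lexx orbT.
have K_ge i : `|ln (g i)| <= K by rewrite /K (bigD1 i) //= lerDl sumr_ge0.
have -> : #|{: I}|%:R * ln S - \sum_i a i = \sum_i (ln S - a i).
  by rewrite sumrB sumr_const mulr_natl.
rewrite (bigD1 i0) //=.
have rest_ge : - K <= \sum_(i | i != i0) (ln S - a i).
  apply: le_trans (_ : - \sum_(i | i != i0) `|ln (g i)| <= _).
    by rewrite lerN2 /K [leRHS](bigD1 i0) //= lerDr.
  rewrite -sumrN; apply: ler_sum => i _.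
  by have := ler_ln_sum_expR a i; have := ln_ge i; lra.
by have := ler_ln_sum_expR a k; have := K_ge k; have := ln_ge k; lra.
Qed.

Lemma continuous_ln_sum_expR (T : topologicalType) (a : T -> I -> R) :
  (forall i, continuous (a^~ i)) ->
  continuous (fun t => ln (\sum_i expR (a t i) * g i)).
Proof.
move=> a_cont t.
have [k _|I0] := pickP (fun _ : I => true); last first.
  by under eq_fun do rewrite big_pred0 //; exact: cst_continuous.
apply: continuous_comp; last exact/continuous_ln/sum_expR_gt0.
apply: (continuous_big add_continuous) => i _ s.
apply: (@continuousM R T); last exact: cst_continuous.
by apply: continuous_comp; [exact: a_cont | exact: continuous_expR].
Qed.

End LogSumExp.

Lemma exists_noninput_output (V : finType) (E : rel V) (h : V) :
  acyclic E -> ~~ is_output E h -> exists o, is_output E o && ~~ is_input E o.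
Proof.
move=> acyc /forallPn [w0 /negbNE hw0].
pose P x := [exists y, connect E h y && E y x].
have Pw0 : P w0 by apply/existsP; exists h; rewrite connect0 hw0.
pose reach x := #|[set y | connect E x y]|.
(* a vertex reachable from h by a nonempty path with the fewest descendants
   has no successor *)
case: (arg_minnP reach Pw0) => o Po o_min.
have [y /andP [hy yo]] := existsP Po.
exists o; apply/andP; split; last by apply/forallPn; exists y; rewrite negbK.
apply/forallP => x; apply/negP => Eox.
have Px : P x.
  by apply/existsP; exists o; rewrite Eox andbT (connect_trans hy) // connect1.
have := o_min x Px; apply/negP; rewrite -ltnNge; apply: proper_card.
apply/properP; split.
  by apply/fintype.subsetP => z; rewrite !inE; apply: connect_trans (connect1 Eox).
exists o; first by rewrite inE connect0.
rewrite inE; apply/negP => xo.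
by have := acyc o; rewrite negb_exists => /forallP /(_ x); rewrite Eox xo.
Qed.

Definition fun_of_rV (T : finType) {R : Type} (v : 'rV[R]_#|{: T}|) : T -> R :=
  fun t => v ord0 (enum_rank t).

Section Objective.
Variables (V : finType) (E : rel V) (R : realType) (th : param E -> R).
Hypothesis Gram_gt0 : forall i, 0 < Gram th i i.

Lemma noninput_of_hidden (h : hidden E) : ~~ is_input E (val h).
Proof. by have /andP [] := valP h. Qed.

Definition bias_of_hidden (h : hidden E) : noninput E :=
  exist _ (val h) (noninput_of_hidden h).

Lemma Bu_bias_hidden (u : hidden E -> R) (h : hidden E) :
  Bu u (inr (bias_of_hidden h)) = - u h.
Proof.
rewrite /Bu (bigD1 h) //= big1 => [|h' h'h].
  by rewrite /Bmat /= eqxx addr0 mulN1r.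
rewrite /Bmat /= (_ : val h == val h' = false) ?mul0r //.
by apply/negbTE; apply: contra h'h => /eqP /val_inj ->.
Qed.

Lemma Bu_bias_output (u : hidden E -> R) (b : noninput E) :
  is_output E (val b) -> Bu u (inr b) = 0.
Proof.
move=> b_out; rewrite /Bu big1 // => h _.
rewrite /Bmat /= (_ : val b == val h = false) ?mul0r //.
apply/negbTE/negP => /eqP bh.
by have /andP [_] := valP h; rewrite -bh b_out.
Qed.

Lemma Fobj_ge_norm (u : hidden E -> R) (h : hidden E) :
  acyclic E -> `|u h| - 2 * \sum_i `|ln (Gram th i i)| <= Fobj th u.
Proof.
move=> acyc; have /andP [_ h_nout] := valP h.
have [w /andP [w_out w_nin]] := @exists_noninput_output _ _ _ acyc h_nout.
pose bw : noninput E := exist _ w w_nin.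
have Fge := @logsumexp_objective_ge _ _ _ Gram_gt0 (Bu u).
have := Fge (inr bw) (inr (bias_of_hidden h)).
have := Fge (inr (bias_of_hidden h)) (inr bw).
rewrite /Fobj Bu_bias_hidden Bu_bias_output //.
by case: (lerP 0 (u h)) => [/ger0_norm|/ltr0_norm] ->; lra.
Qed.

Lemma continuous_Bu (i : param E) :
  continuous (fun v : 'rV[R]_#|{: hidden E}| => Bu (fun_of_rV _ v) i).
Proof.
apply: (continuous_big add_continuous) => h _ v.
by apply: continuousM; [exact: cst_continuous | exact: coord_continuous].
Qed.

Lemma continuous_Fobj :
  continuous (fun v : 'rV[R]_#|{: hidden E}| => Fobj th (fun_of_rV _ v)).
Proof.
move=> v; rewrite /Fobj.
apply: (@continuousB R R _ (fun w => _) (fun w => _) v); last first.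
  by apply: (continuous_big add_continuous) => i _; exact: continuous_Bu.
apply: (@continuousM R _ (fun=> _) _ v); first exact: cst_continuous.
exact: (@continuous_ln_sum_expR _ _ _ Gram_gt0 _ 
  (fun w i => Bu (fun_of_rV _ w) i) continuous_Bu v).
Qed.

End Objective.

(* Minimize on the box [-M, M]^T, outside of which f exceeds f 0. *)
Lemma coercive_continuous_min (R : realType) (T : finType)
    (f : (T -> R) -> R) (C : R) :
  continuous (f \o fun_of_rV T) -> (forall u t, `|u t| - C <= f u) ->
  exists ustar, forall u, f ustar <= f u.
Proof.
move=> f_cont f_coer.
set M := `|f (fun_of_rV T 0) + C|.
pose A := [set v : 'rV[R]_#|{: T}| | forall i, `[-M, M] (v ord0 i)]%classic.
have A0 : A 0 by move=> i /=; rewrite mxE in_itv /= oppr_le0 normr_ge0.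
have A_compact : compact A := rV_compact (fun=> @segment_compact R (-M) M).
have [c _ c_min] :=
  EVT_min_rV (ex_intro _ _ A0) A_compact (continuous_subspaceT f_cont).
exists (fun_of_rV T c) => u.
have [/forallP u_le | /forallPn [t]] := boolP [forall t, `|u t| <= M].
  have -> : u = fun_of_rV T (\row_i u (enum_val i)).
    by apply: funext => t; rewrite /fun_of_rV mxE enum_rankK.
  apply: c_min; rewrite inE => i /=.
  by rewrite mxE in_itv /= -ler_norml; exact: u_le.
rewrite -ltNge => M_lt.
have := c_min 0; rewrite inE => /(_ A0) /=.
have := f_coer u t; have : f (fun_of_rV T 0) + C <= M by exact: ler_norm.
lra.
Qed.

Theorem corollaryF6 (V : finType) (E : rel V) (R : realType)
  (th : param E -> R) :
  acyclic E ->
  (forall i : param E, 0 < Gram th i i) ->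
  exists ustar : hidden E -> R, forall u : hidden E -> R,
    Fobj th ustar <= Fobj th u.
Proof.
move=> acyc Gram_gt0.
apply: (@coercive_continuous_min _ _ _ (2 * \sum_i `|ln (Gram th i i)|)).
  exact: continuous_Fobj.
by move=> u h; apply: Fobj_ge_norm.
Qed.
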